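(* Let $K$ be a field, let $e_1,\dots,e_m$ be a basis of $K^m$, and let $T_1,\dots,T_k:K^m\to K^n$ be linear maps. Suppose that for every $l$ and every choice of distinct indices $i_1,\dots,i_l\in\{1,\dots,m\}$, the span of the vectors $\{T_j(e_{i_t}): 1\le t\le l,\ 1\le j\le k\}$ has dimension at least $2l$. Then there exist functions $\phi,\psi:\{1,\dots,m\}\to\{1,\dots,k\}$ such that the $2m$ vectors $T_{\phi(1)}(e_1),\dots,T_{\phi(m)}(e_m),T_{\psi(1)}(e_1),\dots,T_{\psi(m)}(e_m)$ are linearly independent. *)

From mathcomp Require Import all_boot all_algebra.
Set Implicit Arguments. Unset Strict Implicit. Unset Printing Implicit Defensive.
Import GRing.Theory.
Local Open Scope ring_scope.
Local Open Scope vspace_scope.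

Definition images (K : fieldType) (m n k : nat)
  (e : 'I_m -> 'rV[K]_m) (T : 'I_k -> 'Hom('rV[K]_m, 'rV[K]_n))
  (S : {set 'I_m}) : seq 'rV[K]_n :=
  [seq T j (e i) | i <- enum S, j <- enum 'I_k].

From mathcomp Require Import all_boot all_algebra zify.
Set Implicit Arguments. Unset Strict Implicit. Unset Printing Implicit Defensive.
Import GRing.Theory.
Local Open Scope ring_scope.
Local Open Scope vspace_scope.

(* Rado's theorem for linear matroids: a family of finite lists of vectors
   has an independent transversal as soon as every subfamily J spans a space
   of dimension at least #|J|.  Doubling every index i, both copies carrying
   the list of the T_j(e_i), turns the hypothesis into exactly this condition,
   and the two halves of the transversal give phi and psi.

   Rado's theorem follows by shrinking lists of length >= 2.  If removing x1,
   resp. x2, from the list of i0 violated the condition at J1, resp. J2 (both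
   then contain i0), the spans U and V of the shrunk subfamilies would satisfy
   dim U + dim V <= #|J1| + #|J2| - 2, whereas U + V contains the span of
   J1 :|: J2 and U :&: V that of (J1 :&: J2) :\ i0, so that
   dim (U + V) + dim (U :&: V) = dim U + dim V contradicts the condition. *)

Section RadoTransversal.
Variables (K : fieldType) (vT : vectType K) (I : finType).
Implicit Types (F G : I -> seq vT) (J : {set I}).

Definition family_span F J : {vspace vT} := \sum_(i in J) <<F i>>.

Definition rado_condition F := forall J, (#|J| <= \dim (family_span F J))%N.

Lemma rado_conditionP F :
  reflect (rado_condition F)
          [forall J : {set I}, #|J| <= \dim (family_span F J)]%N.
Proof. exact: (iffP forallP). Qed.

Lemma rado_conditionPn F :
  ~ rado_condition F -> exists J, (\dim (family_span F J) < #|J|)%N.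
Proof.
move/(introN (rado_conditionP F))/forallPn => [J].
by rewrite -ltnNge; exists J.
Qed.

Lemma eq_family_span F G J :
  {in J, F =1 G} -> family_span F J = family_span G J.
Proof. by move=> eqFG; apply: eq_bigr => i /eqFG ->. Qed.

Lemma family_span_eta_notin F J i0 s :
  i0 \notin J -> family_span [eta F with i0 |-> s] J = family_span F J.
Proof.
move=> notinJ; apply: eq_family_span => i iJ /=.
by case: eqP iJ notinJ => // ->->.
Qed.

Lemma family_span_setU_drop F i0 x1 x2 r J1 J2 :
  F i0 = [:: x1, x2 & r] -> i0 \in J1 -> i0 \in J2 ->
  (family_span F (J1 :|: J2) <=
   family_span [eta F with i0 |-> x2 :: r] J1 +
   family_span [eta F with i0 |-> x1 :: r] J2)%VS.
Proof.
set U := family_span _ J1; set V := family_span _ J2 => Fi0 i0J1 i0J2.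
have sub_U i : i \in J1 -> (<<[eta F with i0 |-> x2 :: r] i>> <= U)%VS.
  by move=> iJ1; apply: sumv_sup iJ1 _.
have sub_V i : i \in J2 -> (<<[eta F with i0 |-> x1 :: r] i>> <= V)%VS.
  by move=> iJ2; apply: sumv_sup iJ2 _.
apply/subv_sumP => i; rewrite inE; case: (eqVneq i i0) => [-> _ | ne_i0].
  rewrite Fi0 (span_cat [:: x1]) addvC; apply: addvS.
    by have := sub_U _ i0J1; rewrite /= eqxx.
  have := sub_V _ i0J2.
  by rewrite /= eqxx (span_cat [:: x1]) subv_add => /andP[].
case/orP => [/sub_U | /sub_V]; rewrite /= (negPf ne_i0) => sub_i.
  exact: subv_trans sub_i (addvSl U V).
exact: subv_trans sub_i (addvSr U V).
Qed.

Lemma family_span_setI_drop F i0 s1 s2 J1 J2 :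
  (family_span F ((J1 :&: J2) :\ i0) <=
   family_span [eta F with i0 |-> s1] J1 :&:
   family_span [eta F with i0 |-> s2] J2)%VS.
Proof.
rewrite subv_cap; apply/andP; split; apply/subv_sumP => i;
  rewrite !inE => /and3P[ne_i0 iJ1 iJ2];
  [apply: sumv_sup iJ1 _ | apply: sumv_sup iJ2 _]; by rewrite /= (negPf ne_i0).
Qed.

Lemma rado_condition_drop F i0 x1 x2 r :
  F i0 = [:: x1, x2 & r] -> rado_condition F ->
  rado_condition [eta F with i0 |-> x2 :: r] \/
  rado_condition [eta F with i0 |-> x1 :: r].
Proof.
move=> Fi0 radoF.
set F1 := [eta F with i0 |-> x2 :: r]; set F2 := [eta F with i0 |-> x1 :: r].
have [rado1 | /rado_conditionPn[J1 lt1]] := decP (rado_conditionP F1).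
  by left.
have [rado2 | /rado_conditionPn[J2 lt2]] := decP (rado_conditionP F2).
  by right.
exfalso.
have i0J1 : i0 \in J1.
  by apply: contraTT lt1 => /family_span_eta_notin->; rewrite -leqNgt.
have i0J2 : i0 \in J2.
  by apply: contraTT lt2 => /family_span_eta_notin->; rewrite -leqNgt.
have := dimv_sum_cap (family_span F1 J1) (family_span F2 J2).
have := dimvS (family_span_setU_drop Fi0 i0J1 i0J2).
have := dimvS (family_span_setI_drop F i0 (x2 :: r) (x1 :: r) J1 J2).
have := radoF (J1 :|: J2); have := radoF ((J1 :&: J2) :\ i0).
have := cardsUI J1 J2; have := cardsD1 i0 (J1 :&: J2); rewrite inE i0J1 i0J2.
(* Folding U and V makes the atoms of lt1 and lt2 syntactically equal to the
   others, as lia requires. *)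
move: lt1 lt2; set U := family_span F1 J1; set V := family_span F2 J2.
lia.
Qed.

Lemma rado_transversal_size1 F :
  rado_condition F -> (forall i, size (F i) <= 1)%N ->
  exists2 x : I -> vT, forall i, x i \in F i & free (map x (enum I)).
Proof.
move=> radoF size_le1; pose x i := head 0%R (F i).
have Fx i : F i = [:: x i].
  have := radoF [set i]; rewrite cards1 /family_span big_set1 /x.
  by have := size_le1 i; case: (F i) => [|a [|b s]] //=; rewrite span_nil dimv0.
exists x => [i|]; first by rewrite Fx mem_seq1.
have span_x : <<map x (enum I)>> = family_span F setT.
  rewrite span_def big_map /family_span big_enum_cond /=.
  by apply: eq_big => [i | i _]; rewrite ?inE // Fx span_seq1.
rewrite /free eqn_leq dim_span span_x /= size_map -cardE -cardsT.
exact: radoF.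
Qed.

Lemma sum_size_eta_with F i0 s :
  (\sum_i size ([eta F with i0 |-> s] i) =
   size s + \sum_(i | i != i0) size (F i))%N.
Proof.
rewrite (bigD1 i0) //= eqxx; congr (_ + _)%N.
by apply: eq_bigr => i /negPf ->.
Qed.

Theorem rado_transversal F : rado_condition F ->
  exists2 x : I -> vT, forall i, x i \in F i & free (map x (enum I)).
Proof.
have [N] := ubnP (\sum_i size (F i)); elim: N F => // N IH F sizeF radoF.
have [i0 size_i0 | size_le1] :=
  pickP [pred i | 1 < size (F i)]%N; last first.
  apply: rado_transversal_size1 => // i.
  by rewrite leqNgt; apply/negbT/size_le1.
move: size_i0 => /=; case Fi0: (F i0) => [|x1 [|x2 r]] // _.
have shrink s : {subset s <= F i0} -> (size s < size (F i0))%N ->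
    rado_condition [eta F with i0 |-> s] ->
    exists2 x : I -> vT, forall i, x i \in F i & free (map x (enum I)).
  move=> sub_s lt_s /IH[|x Gx free_x].
    rewrite sum_size_eta_with -ltnS; apply: leq_trans sizeF.
    by rewrite [(\sum_i _)%N](bigD1 i0) //= ltnS ltn_add2r.
  exists x => // i; have := Gx i; rewrite /=.
  by case: eqP => [-> /sub_s | //].
have [rado2 | rado1] := rado_condition_drop Fi0 radoF.
  by apply: shrink rado2 => [y|]; rewrite Fi0 // !inE => ->; rewrite orbT.
by apply: shrink rado1 => [y|]; rewrite Fi0 // !inE => /orP[] ->; rewrite ?orbT.
Qed.

End RadoTransversal.

Lemma rado_condition_double (K : fieldType) (vT : vectType K) (I : finType)
    (G : I -> seq vT) :
  (forall S : {set I}, 2 * #|S| <= \dim (family_span G S))%N ->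
  rado_condition (fun p : bool * I => G p.2).
Proof.
move=> radoG J; pose S := [set p.2 | p in J].
have card_J : (#|J| <= 2 * #|S|)%N.
  have /subset_leq_card : J \subset setX [set: bool] S.
    by apply/subsetP => p pJ; rewrite !inE /= imset_f.
  by rewrite cardsX cardsT card_bool.
apply: leq_trans card_J (leq_trans (radoG S) (dimvS _)).
apply/subv_sumP => _ /imsetP[p pJ ->].
exact: (sumv_sup p).
Qed.

Lemma span_images (K : fieldType) (m n k : nat)
    (e : 'I_m -> 'rV[K]_m) (T : 'I_k -> 'Hom('rV[K]_m, 'rV[K]_n))
    (S : {set 'I_m}) :
  <<images e T S>> = family_span (fun i => [seq T j (e i) | j <- enum 'I_k]) S.
Proof.
rewrite span_def big_allpairs_dep /family_span -big_enum.
by under [RHS]eq_bigr do rewrite span_def big_map.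
Qed.

Lemma enum_bool_prod (T : finType) :
  enum ((bool * T)%type : predArgType) =
  [seq (true, i) | i <- enum T] ++ [seq (false, i) | i <- enum T].
Proof.
have enum_bool : enum (bool : predArgType) = [:: true; false].
  by rewrite enumT unlock.
by rewrite [LHS]enumT unlock /= /prod_enum enum_bool /= cats0.
Qed.

Theorem lemma6 (K : fieldType) (m n k : nat)
  (e : 'I_m -> 'rV[K]_m) (T : 'I_k -> 'Hom('rV[K]_m, 'rV[K]_n)) :
  basis_of fullv [seq e i | i <- enum 'I_m] ->
  (forall S : {set 'I_m}, (2 * #|S| <= \dim <<images e T S>>)%N) ->
  exists phi psi : 'I_m -> 'I_k,
    free ([seq T (phi i) (e i) | i <- enum 'I_m] ++
          [seq T (psi i) (e i) | i <- enum 'I_m]).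
Proof.
move=> _ dim_images; pose G i := [seq T j (e i) | j <- enum 'I_k].
have radoG : rado_condition (fun p : bool * 'I_m => G p.2).
  by apply: rado_condition_double => S; rewrite -span_images.
have [x Gx free_x] := rado_transversal radoG.
have choose_j b i : exists j, x (b, i) = T j (e i).
  by have /mapP[j _ ->] := Gx (b, i); exists j.
have [phi phiE] := fin_all_exists (choose_j true).
have [psi psiE] := fin_all_exists (choose_j false).
exists phi, psi; move: free_x; rewrite enum_bool_prod map_cat -!map_comp.
by congr (free (_ ++ _)); apply: eq_map => i /=; rewrite ?phiE ?psiE.
Qed.
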